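(* A descriptive $\mathsf{MS4}$-frame $\mathfrak{G}=(Y,R,E)$ validates $\mathsf{GKur}$ if and only if it satisfies the global Kuroda principle: $E[\operatorname{qmax}Y]=\operatorname{qmax}Y$ (equivalently, for every $x\in\operatorname{qmax}Y$, $E[x]\subseteq\operatorname{qmax}Y$).
   Context: $\mathsf{MIPC}$ is the smallest set of formulas in the bimodal language $\mathcal{L}_{\forall\exists}$ containing all theorems of $\mathsf{IPC}$; $\forall(p\wedge q)\leftrightarrow(\forall p\wedge\forall q)$, $\forall p\to p$, $\forall p\to\forall\forall p$; $\exists(p\vee q)\leftrightarrow(\exists p\vee\exists q)$, $p\to\exists p$, $\exists\exists p\to\exists p$, $(\exists p\wedge\exists q)\to\exists(\exists p\wedge q)$; $\exists\forall p\to\forall p$, $\exists p\to\forall\exists p$; closed under modus ponens, substitution and $\varphi/\forall\varphi$. $\mathsf{Kur}=\mathsf{MIPC}+\forall\neg\neg p\to\neg\neg\forall p$. $\mathsf{MS4}$ is the smallest set of formulas in the classical bimodal language $\mathcal{L}_{\Box\forall}$ containing all classical tautologies, the $\mathsf{S4}$ axioms for $\Box$, the $\mathsf{S5}$ axioms for $\forall$, and $\Box\forall p\to\forall\Box p$, closed under modus ponens, substitution, $\Box$- and $\forall$-necessitation. $\mathsf{GKur}=\mathsf{MS4}+\{\varphi^t:\mathsf{Kur}\vdash\varphi\}$, with $(-)^t$ the Gödel translation: $\bot^t=\bot$, $p^t=\Box p$, $(\varphi\wedge\psi)^t=\varphi^t\wedge\psi^t$, $(\varphi\vee\psi)^t=\varphi^t\vee\psi^t$,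 $(\varphi\to\psi)^t=\Box(\neg\varphi^t\vee\psi^t)$, $(\forall\varphi)^t=\Box\forall\varphi^t$, $(\exists\varphi)^t=\exists\varphi^t$ (where $\exists=\neg\forall\neg$). A descriptive $\mathsf{MS4}$-frame is $(Y,R,E)$ with $Y$ a Stone space, $R$ a continuous quasi-order, $E$ a continuous equivalence relation (continuous: $R[x]$ closed for all $x$, $R^{-1}[U]$ clopen for clopen $U$), such that $xEy$, $yRz$ imply $\exists u$ with $xRu$, $uEz$. Valuations assign clopen sets; $\Box$ is interpreted via $R$, $\forall$ via $E$. $\operatorname{qmax}Y=\{x: xRy\Rightarrow yRx\}$. *)

From mathcomp Require Import all_boot all_order.
From mathcomp Require Import all_classical topology.
Set Implicit Arguments. Unset Strict Implicit. Unset Printing Implicit Defensive.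
Local Open Scope classical_set_scope.

Inductive iform : Type :=
| IVar : nat -> iform
| IBot : iform
| IAnd : iform -> iform -> iform
| IOr  : iform -> iform -> iform
| IImp : iform -> iform -> iform
| IAll : iform -> iform
| IEx  : iform -> iform.

Definition INeg (a : iform) := IImp a IBot.
Definition IIff (a b : iform) := IAnd (IImp a b) (IImp b a).

Fixpoint isubst (s : nat -> iform) (a : iform) : iform :=
  match a with
  | IVar n => s n
  | IBot => IBot
  | IAnd a b => IAnd (isubst s a) (isubst s b)
  | IOr a b => IOr (isubst s a) (isubst s b)
  | IImp a b => IImp (isubst s a) (isubst s b)
  | IAll a => IAll (isubst s a)
  | IEx a => IEx (isubst s a)
  end.

Definition ip := IVar 0.
Definition iq := IVar 1.
Definition ir := IVar 2.

(* Standard Hilbert axioms for IPC (in the letters p q r; closure under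
   substitution and modus ponens yields all theorems of IPC, and all their
   substitution instances in the modal language). *)
Inductive IPC_axiom : iform -> Prop :=
| ipc_K  : IPC_axiom (IImp ip (IImp iq ip))
| ipc_S  : IPC_axiom (IImp (IImp ip (IImp iq ir)) (IImp (IImp ip iq) (IImp ip ir)))
| ipc_A1 : IPC_axiom (IImp (IAnd ip iq) ip)
| ipc_A2 : IPC_axiom (IImp (IAnd ip iq) iq)
| ipc_A3 : IPC_axiom (IImp ip (IImp iq (IAnd ip iq)))
| ipc_O1 : IPC_axiom (IImp ip (IOr ip iq))
| ipc_O2 : IPC_axiom (IImp iq (IOr ip iq))
| ipc_O3 : IPC_axiom (IImp (IImp ip ir) (IImp (IImp iq ir) (IImp (IOr ip iq) ir)))
| ipc_EFQ : IPC_axiom (IImp IBot ip).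

Inductive MIPC_axiom : iform -> Prop :=
| mipc_ipc a : IPC_axiom a -> MIPC_axiom a
| mipc_all_and : MIPC_axiom (IIff (IAll (IAnd ip iq)) (IAnd (IAll ip) (IAll iq)))
| mipc_all_T : MIPC_axiom (IImp (IAll ip) ip)
| mipc_all_4 : MIPC_axiom (IImp (IAll ip) (IAll (IAll ip)))
| mipc_ex_or : MIPC_axiom (IIff (IEx (IOr ip iq)) (IOr (IEx ip) (IEx iq)))
| mipc_ex_T : MIPC_axiom (IImp ip (IEx ip))
| mipc_ex_4 : MIPC_axiom (IImp (IEx (IEx ip)) (IEx ip))
| mipc_ex_and : MIPC_axiom (IImp (IAnd (IEx ip) (IEx iq)) (IEx (IAnd (IEx ip) iq)))
| mipc_ex_all : MIPC_axiom (IImp (IEx (IAll ip)) (IAll ip))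
| mipc_ex_all2 : MIPC_axiom (IImp (IEx ip) (IAll (IEx ip))).

Inductive Kur_thm : iform -> Prop :=
| kur_ax a : MIPC_axiom a -> Kur_thm a
| kur_kur : Kur_thm (IImp (IAll (INeg (INeg ip))) (INeg (INeg (IAll ip))))
| kur_mp a b : Kur_thm (IImp a b) -> Kur_thm a -> Kur_thm b
| kur_subst s a : Kur_thm a -> Kur_thm (isubst s a)
| kur_nec a : Kur_thm a -> Kur_thm (IAll a).

Inductive cform : Type :=
| CVar : nat -> cform
| CBot : cform
| CAnd : cform -> cform -> cform
| COr  : cform -> cform -> cform
| CImp : cform -> cform -> cform
| CBox : cform -> cform
| CAll : cform -> cform.

Definition CNeg (a : cform) := CImp a CBot.
Definition CEx (a : cform) := CNeg (CAll (CNeg a)).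

Fixpoint csubst (s : nat -> cform) (a : cform) : cform :=
  match a with
  | CVar n => s n
  | CBot => CBot
  | CAnd a b => CAnd (csubst s a) (csubst s b)
  | COr a b => COr (csubst s a) (csubst s b)
  | CImp a b => CImp (csubst s a) (csubst s b)
  | CBox a => CBox (csubst s a)
  | CAll a => CAll (csubst s a)
  end.

Definition cp := CVar 0.
Definition cq := CVar 1.
Definition cr := CVar 2.

Inductive CPC_axiom : cform -> Prop :=
| cpc_K  : CPC_axiom (CImp cp (CImp cq cp))
| cpc_S  : CPC_axiom (CImp (CImp cp (CImp cq cr)) (CImp (CImp cp cq) (CImp cp cr)))
| cpc_A1 : CPC_axiom (CImp (CAnd cp cq) cp)
| cpc_A2 : CPC_axiom (CImp (CAnd cp cq) cq)
| cpc_A3 : CPC_axiom (CImp cp (CImp cq (CAnd cp cq)))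
| cpc_O1 : CPC_axiom (CImp cp (COr cp cq))
| cpc_O2 : CPC_axiom (CImp cq (COr cp cq))
| cpc_O3 : CPC_axiom (CImp (CImp cp cr) (CImp (CImp cq cr) (CImp (COr cp cq) cr)))
| cpc_EFQ : CPC_axiom (CImp CBot cp)
| cpc_DNE : CPC_axiom (CImp (CNeg (CNeg cp)) cp).

Inductive MS4_axiom : cform -> Prop :=
| ms4_cpc a : CPC_axiom a -> MS4_axiom a
| ms4_box_K : MS4_axiom (CImp (CBox (CImp cp cq)) (CImp (CBox cp) (CBox cq)))
| ms4_box_T : MS4_axiom (CImp (CBox cp) cp)
| ms4_box_4 : MS4_axiom (CImp (CBox cp) (CBox (CBox cp)))
| ms4_all_K : MS4_axiom (CImp (CAll (CImp cp cq)) (CImp (CAll cp) (CAll cq)))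
| ms4_all_T : MS4_axiom (CImp (CAll cp) cp)
| ms4_all_5 : MS4_axiom (CImp (CEx cp) (CAll (CEx cp)))
| ms4_left : MS4_axiom (CImp (CBox (CAll cp)) (CAll (CBox cp))).

Fixpoint gtrans (a : iform) : cform :=
  match a with
  | IVar n => CBox (CVar n)
  | IBot => CBot
  | IAnd a b => CAnd (gtrans a) (gtrans b)
  | IOr a b => COr (gtrans a) (gtrans b)
  | IImp a b => CBox (COr (CNeg (gtrans a)) (gtrans b))
  | IAll a => CBox (CAll (gtrans a))
  | IEx a => CEx (gtrans a)
  end.

Inductive GKur_thm : cform -> Prop :=
| gkur_ax a : MS4_axiom a -> GKur_thm a
| gkur_trans a : Kur_thm a -> GKur_thm (gtrans a)
| gkur_mp a b : GKur_thm (CImp a b) -> GKur_thm a -> GKur_thm b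
| gkur_subst s a : GKur_thm a -> GKur_thm (csubst s a)
| gkur_box_nec a : GKur_thm a -> GKur_thm (CBox a)
| gkur_all_nec a : GKur_thm a -> GKur_thm (CAll a).

Definition stone_space (T : topologicalType) : Prop :=
  [/\ compact [set: T], hausdorff_space T &
      forall (x : T) (A : set T), nbhs x A ->
        exists U : set T, [/\ clopen U, U x & U `<=` A]].

Definition continuous_rel (T : topologicalType) (R : T -> T -> Prop) : Prop :=
  (forall x, closed [set y | R x y]) /\
  (forall U : set T, clopen U -> clopen [set x | exists2 y, R x y & U y]).

Definition descriptive_MS4_frame (T : topologicalType)
    (R E : T -> T -> Prop) : Prop :=
  stone_space T /\
  ((forall x, R x x) /\ (forall x y z, R x y -> R y z -> R x z)) /\
  continuous_rel R /\
  ((forall x, E x x) /\ (forall x y, E x y -> E y x) /\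
   (forall x y z, E x y -> E y z -> E x z)) /\
  continuous_rel E /\
  (forall x y z, E x y -> R y z -> exists2 u, R x u & E u z).

Fixpoint truth (T : Type) (R E : T -> T -> Prop) (V : nat -> set T)
    (a : cform) : set T :=
  match a with
  | CVar n => V n
  | CBot => set0
  | CAnd a b => truth R E V a `&` truth R E V b
  | COr a b => truth R E V a `|` truth R E V b
  | CImp a b => ~` truth R E V a `|` truth R E V b
  | CBox a => [set x | forall y, R x y -> truth R E V a y]
  | CAll a => [set x | forall y, E x y -> truth R E V a y]
  end.

Definition frame_valid (T : topologicalType) (R E : T -> T -> Prop)
    (a : cform) : Prop :=
  forall V : nat -> set T, (forall n, clopen (V n)) ->
    truth R E V a = [set: T].

Definition validates_GKur (T : topologicalType) (R E : T -> T -> Prop) : Prop :=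
  forall a, GKur_thm a -> frame_valid R E a.

Definition qmax (T : Type) (R : T -> T -> Prop) : set T :=
  [set x | forall y, R x y -> R y x].

Definition rel_image (T : Type) (E : T -> T -> Prop) (A : set T) : set T :=
  [set y | exists2 x, A x & E x y].

From mathcomp Require Import all_boot all_order.
From mathcomp Require Import all_classical topology.
Local Open Scope classical_set_scope.

(* Under the Goedel translation every formula denotes an R-upset, and at a
   quasi-maximal point a translated formula is equivalent to its double
   negation.  Compactness and the closedness of the sets R[x] let Zorn's lemma
   put a quasi-maximal point above every point, so when E[qmax Y] = qmax Y the
   translated Kuroda axiom holds; the rest of GKur is sound in every
   MS4-frame.  Conversely, let x be quasi-maximal, xEy, and y R z with not z R y.
   A clopen neighbourhood C of y missing R[z] gives the clopen set
   D = Y \ R^-1[C] containing z, and P = Y \ (R^-1[D] \ D) contains qmax Y but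
   not y.  Valuating p by P makes forall ~~p true and ~~forall p false at x. *)

Lemma qmax_upward (T : Type) (R : T -> T -> Prop) :
  (forall x y z, R x y -> R y z -> R x z) ->
  forall x y, qmax R x -> R x y -> qmax R y.
Proof. by move=> Rtr x y qx xy z yz; apply: Rtr (qx z (Rtr _ _ _ xy yz)) xy. Qed.

Section DescriptivePreorder.
Context {T : topologicalType} {R : T -> T -> Prop}.
Hypotheses (Rrefl : forall x, R x x) (Rtr : forall x y z, R x y -> R y z -> R x z).
Hypothesis Rclosed : forall x, closed [set y | R x y].

Lemma compact_chain_upper_bound (A : set T) :
  compact [set: T] -> A !=set0 -> total_on A R -> exists p, forall s, A s -> R s p.
Proof.
move=> cT [a Aa] Atot; pose F := filter_from A (fun s => [set y | R s y]).
have FF : ProperFilter F.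
  apply: filter_from_proper => [|s _]; last by exists s.
  apply: filter_from_filter => [|s t As At]; first by exists a.
  have [st|ts] := Atot s t As At.
  - by exists t => // y ty; split=> //; exact: Rtr st ty.
  - by exists s => // y sy; split=> //; exact: Rtr ts sy.
have [p [_ Fp]] := cT F FF filterT.
exists p => s As; rewrite clusterE in Fp.
by have := Fp _ (in_filter_from _ As); rewrite -(closure_id _).1.
Qed.

Lemma compact_qmax_above : compact [set: T] -> forall x, exists2 y, R x y & qmax R y.
Proof.
move=> cT x; pose S := {y : T | R x y}.
have [|||[y xy] ymax] := @ZL_preorder S (exist _ x (Rrefl x))
    (fun s t => `[< R (sval s) (sval t) >]).
- by move=> s; apply/asboolP.
- by move=> r s t /asboolP rs /asboolP st; apply/asboolP; exact: Rtr rs st.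
- move=> A Atot; have [[a Aa]|A0] := pselect (exists a, A a); last first.
    by exists (exist _ x (Rrefl x)) => s As; case: A0; exists s.
  have [|_ _ [s As <-] [t At <-]|p Ap] :=
      compact_chain_upper_bound (sval @` A) cT; first by exists (sval a), a.
    by have [/asboolP|/asboolP] := Atot s t As At; [left|right].
  have xp : R x p by exact: Rtr (svalP a) (Ap _ (imageP _ Aa)).
  by exists (exist _ p xp) => t At; apply/asboolP; apply: Ap; exists t.
- exists y => // z yz.
  by have /asboolP := ymax (exist _ z (Rtr _ _ _ xy yz)) (asboolT yz).
Qed.

Lemma qmax_clopen_separation :
  stone_space T -> (forall U, clopen U -> clopen [set x | exists2 y, R x y & U y]) ->
  forall y, ~ qmax R y -> exists P, [/\ clopen P, qmax R `<=` P & ~ P y].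
Proof.
move=> [_ _ clopen_basis] Rclopen y /existsNP[z /not_implyP[yz nzy]].
have nRz_nbhs : nbhs y (~` [set t | R z t]).
  by apply: open_nbhs_nbhs; split=> //; exact: closed_openC.
have [C [cC Cy CnRz]] := clopen_basis y _ nRz_nbhs.
pose D := ~` [set t | exists2 s, R t s & C s].
pose W := [set t | exists2 s, R t s & D s] `&` ~` D.
exists (~` W); split.
- have cD : clopen D := clopenC set0 (Rclopen _ cC).
  exact: clopenC set0 (clopenI (Rclopen _ cD) (clopenC set0 cD)).
- move=> t qt [[s ts Ds] /contrapT[u tu Cu]].
  by apply: Ds; exists u => //; exact: Rtr (qt s ts) tu.
- move=> nWy; apply: nWy; split; last by apply; exists y.
  by exists z => // -[s zs /CnRz]; apply.
Qed.

End DescriptivePreorder.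

Section Truth.
Context {T : Type} {R E : T -> T -> Prop} {V : nat -> set T}.

Lemma truth_impP a b x :
  truth R E V (CImp a b) x <-> (truth R E V a x -> truth R E V b x).
Proof. by rewrite implyE. Qed.

Lemma truth_andP a b x :
  truth R E V (CAnd a b) x <-> truth R E V a x /\ truth R E V b x.
Proof. by []. Qed.

Lemma truth_orP a b x :
  truth R E V (COr a b) x <-> truth R E V a x \/ truth R E V b x.
Proof. by []. Qed.

Lemma truth_negP a x : truth R E V (CNeg a) x <-> ~ truth R E V a x.
Proof. by rewrite truth_impP; split=> // H /H. Qed.

Lemma truth_exP a x :
  truth R E V (CEx a) x <-> exists2 y, E x y & truth R E V a y.
Proof.
rewrite truth_negP; split=> [|[y xy ay] Hall]; last first.
  by have /truth_negP := Hall y xy.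
by move=> /existsNP[y /not_implyP[xy /truth_negP/contrapT ay]]; exists y.
Qed.

Lemma truth_or_negP a b x :
  truth R E V (COr (CNeg a) b) x <-> (truth R E V a x -> truth R E V b x).
Proof.
split=> [[/truth_negP na ax|//]|]; first by case: (na ax).
by move=> H; have [/H|na] := pselect (truth R E V a x); [right|left; apply/truth_negP].
Qed.

Lemma truth_csubst s a :
  truth R E V (csubst s a) = truth R E (fun n => truth R E V (s n)) a.
Proof. by elim: a => //= [a IHa b IHb|a IHa b IHb|a IHa b IHb|a IHa|a IHa];
  rewrite ?IHa ?IHb. Qed.

End Truth.

Local Notation kuroda := (IImp (IAll (INeg (INeg ip))) (INeg (INeg (IAll ip)))).

Section GoedelTranslation.
Context {T : Type} {R E : T -> T -> Prop}.
Hypotheses (Rrefl : forall x, R x x) (Rtr : forall {x y z}, R x y -> R y z -> R x z).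
Hypotheses (Erefl : forall x, E x x) (Esym : forall {x y}, E x y -> E y x)
  (Etr : forall {x y z}, E x y -> E y z -> E x z).
Hypothesis ER_comm : forall {x y z}, E x y -> R y z -> exists2 u, R x u & E u z.

Local Notation tr V a := (truth R E V (gtrans a)).

Lemma truth_ex_Eclosed {V a x y} :
  truth R E V (CEx a) x -> E x y -> truth R E V (CEx a) y.
Proof.
move=> /truth_exP[z xz az] xy.
by apply/truth_exP; exists z => //; exact: Etr (Esym xy) xz.
Qed.

Lemma gtrans_impP V a b x :
  tr V (IImp a b) x <-> forall y, R x y -> tr V a y -> tr V b y.
Proof.
by split=> H y xy; apply/truth_or_negP; exact: H.
Qed.

Lemma gtrans_negP V a x : tr V (INeg a) x <-> forall y, R x y -> ~ tr V a y.
Proof. by rewrite gtrans_impP; split=> H y xy /H; apply. Qed.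

Lemma gtrans_upward {V a x y} : tr V a x -> R x y -> tr V a y.
Proof.
elim: a x y => [n||a IHa b IHb|a IHa b IHb|a IHa b IHb|a IHa|a IHa] x y //=.
- by move=> H xy z yz; apply: H; exact: Rtr xy yz.
- by move=> [ax bx] xy; split; [exact: IHa ax xy|exact: IHb bx xy].
- by move=> [ax|bx] xy; [left; exact: IHa ax xy|right; exact: IHb bx xy].
- by move=> H xy z yz; apply: H; exact: Rtr xy yz.
- by move=> H xy z yz; apply: H; exact: Rtr xy yz.
- move=> /truth_exP[z xz az] xy; apply/truth_exP.
  have [u zu uy] := ER_comm (Esym xz) xy.
  by exists u; [exact: Esym|exact: IHa az zu].
Qed.

Lemma gtrans_isubst V s a :
  tr V (isubst s a) = truth R E (fun n => tr V (s n)) (gtrans a).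
Proof.
elim: a => [n||a IHa b IHb|a IHa b IHb|a IHa b IHb|a IHa|a IHa] /=;
  rewrite ?IHa ?IHb //.
by apply/seteqP; split=> [x sx y xy|x]; [exact: gtrans_upward sx xy|apply].
Qed.

Lemma gtrans_qmax_dneg V a x : qmax R x -> tr V (INeg (INeg a)) x -> tr V a x.
Proof.
move=> qx /gtrans_negP/(_ x (Rrefl x)) nna; apply: contrapT => na.
by apply/nna/gtrans_negP => y xy ay; apply: na; exact: gtrans_upward ay (qx y xy).
Qed.

Lemma IPC_axiom_sound a V x : IPC_axiom a -> tr V a x.
Proof.
case; apply/gtrans_impP => y _.
- by move=> py; apply/gtrans_impP => z yz _; exact: gtrans_upward py yz.
- move=> /gtrans_impP pqr; apply/gtrans_impP => z yz /gtrans_impP pq.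
  apply/gtrans_impP => w zw pw; have /gtrans_impP qr := pqr w (Rtr yz zw) pw.
  exact: qr w (Rrefl w) (pq w zw pw).
- by case.
- by case.
- move=> py; apply/gtrans_impP => z yz qz; split=> //.
  exact: gtrans_upward py yz.
- by left.
- by right.
- move=> /gtrans_impP pr; apply/gtrans_impP => z yz /gtrans_impP qr.
  apply/gtrans_impP => w zw [pw|qw]; [exact: pr w (Rtr yz zw) pw|exact: qr w zw qw].
- by [].
Qed.

Lemma MIPC_axiom_sound a V x : MIPC_axiom a -> tr V a x.
Proof.
case; first by move=> b /IPC_axiom_sound.
- split; apply/gtrans_impP => y _.
    by move=> H; split=> v yv u vu; case: (H v yv u vu).
  by move=> [Hp Hq] v yv u vu; split; [exact: Hp v yv u vu|exact: Hq v yv u vu].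
- by apply/gtrans_impP => y _ H; apply: (H y (Rrefl y) y (Erefl y)).
- apply/gtrans_impP => y _ H v yv u vu s us t st.
  have [r vr rs] := ER_comm vu us.
  exact: H r (Rtr yv vr) t (Etr rs st).
- split; apply/gtrans_impP => y _.
    by move=> /truth_exP[z yz [pz|qz]]; [left|right]; apply/truth_exP; exists z.
  by move=> /truth_orP[|] /truth_exP[z yz hz]; apply/truth_exP; exists z => //;
    [left|right].
- by apply/gtrans_impP => y _ py; apply/truth_exP; exists y.
- apply/gtrans_impP => y _ /truth_exP[z yz /truth_exP[w zw pw]].
  by apply/truth_exP; exists w => //; exact: Etr yz zw.
- apply/gtrans_impP => y _ /truth_andP[/truth_exP[z yz pz] /truth_exP[w yw qw]].
  apply/truth_exP; exists w => //; split=> //.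
  by apply/truth_exP; exists z => //; exact: Etr (Esym yw) yz.
- apply/gtrans_impP => y _ /truth_exP[z yz H] v yv u vu.
  have [t zt tv] := ER_comm (Esym yz) yv.
  exact: H t zt u (Etr tv vu).
- apply/gtrans_impP => y _ H v yv u vu.
  exact: truth_ex_Eclosed (gtrans_upward H yv) vu.
Qed.

Lemma MS4_axiom_sound a V x : MS4_axiom a -> truth R E V a x.
Proof.
case.
- move=> b []; move: (EM (V 0 x)) (EM (V 1 x)) (EM (V 2 x));
    rewrite /= /setU /setC /setI /set0 /mkset; tauto.
- apply/truth_impP => H1; apply/truth_impP => H2 y xy.
  by case: (H1 y xy) => // /(_ (H2 y xy)).
- by apply/truth_impP => H; exact: H x (Rrefl x).
- by apply/truth_impP => H y xy z yz; exact: H z (Rtr xy yz).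
- apply/truth_impP => H1; apply/truth_impP => H2 y xy.
  by case: (H1 y xy) => // /(_ (H2 y xy)).
- by apply/truth_impP => H; exact: H x (Erefl x).
- by apply/truth_impP => ex y xy; exact: truth_ex_Eclosed ex xy.
- apply/truth_impP => H y xy z yz.
  have [u xu uz] := ER_comm xy yz.
  exact: H u xu z uz.
Qed.

Section QuasiMaximalAbove.
Hypothesis qmax_above : forall x, exists2 y, R x y & qmax R y.

Lemma all_dneg_ip_true V x : qmax R `<=` V 0 -> tr V (IAll (INeg (INeg ip))) x.
Proof.
move=> qV v _ u _; apply/(gtrans_negP V (INeg ip) u) => t ut /gtrans_negP nt.
have [q tq qq] := qmax_above t.
by apply: (nt q tq) => s qs; apply: qV; exact: qmax_upward qq qs.
Qed.

Section GlobalKuroda.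
Hypothesis qmax_Esaturated : rel_image E (qmax R) `<=` qmax R.

Lemma kuroda_sound V x : tr V kuroda x.
Proof.
apply/gtrans_impP => y _ Hy; apply/gtrans_negP => w yw /gtrans_negP nall.
have [q wq qq] := qmax_above w.
apply: (nall q wq) => v qv u vu; apply: (@gtrans_qmax_dneg V ip u).
  by apply: qmax_Esaturated; exists v => //; exact: qmax_upward qq qv.
exact: Hy v (Rtr yw (Rtr wq qv)) u vu.
Qed.

Lemma Kur_thm_sound a : Kur_thm a -> forall V x, tr V a x.
Proof.
elim=> {a} [a Ma||a b _ ab _ ha|s a _ IH|a _ IH] V x.
- exact: MIPC_axiom_sound.
- exact: kuroda_sound.
- by move/gtrans_impP: (ab V x) => /(_ x (Rrefl x)); apply.
- by rewrite gtrans_isubst; apply: IH.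
- by move=> y _ z _; apply: IH.
Qed.

Lemma GKur_thm_sound a : GKur_thm a -> forall V x, truth R E V a x.
Proof.
elim=> {a} [a Ma|a Ka|a b _ ab _ ha|s a _ IH|a _ IH|a _ IH] V x.
- exact: MS4_axiom_sound.
- exact: Kur_thm_sound.
- by case: (ab V x) => // /(_ (ha V x)).
- by rewrite truth_csubst; apply: IH.
- by move=> y _; apply: IH.
- by move=> y _; apply: IH.
Qed.

End GlobalKuroda.
End QuasiMaximalAbove.

Lemma dneg_all_ip_false {V x y} :
  qmax R x -> E x y -> ~ V 0 y -> ~ tr V (INeg (INeg (IAll ip))) x.
Proof.
move=> qx xy nVy /gtrans_negP/(_ x (Rrefl x)); apply; apply/gtrans_negP => v xv all_v.
by apply: nVy; apply: (all_v x (qx v xv) y xy y (Rrefl y)).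
Qed.

End GoedelTranslation.

Theorem theorem3p15 (T : topologicalType) (R E : T -> T -> Prop) :
  descriptive_MS4_frame R E ->
  (validates_GKur R E <-> rel_image E (qmax R) = qmax R).
Proof.
move=> [stoneT [[Rrefl Rtr] [[Rclosed Rclopen] [[Erefl [Esym Etr]] [_ ER_comm]]]]].
have [compactT _ _] := stoneT.
have qmax_above := compact_qmax_above Rrefl Rtr Rclosed compactT.
split=> [valid|Eqmax]; last first.
  move=> a Ga V _; apply/seteqP; split=> // x _.
  by apply: GKur_thm_sound Ga V x => //; rewrite Eqmax.
apply/seteqP; split=> [y [x qx xy]|x qx]; last by exists x.
apply: contrapT => nqy.
have [P [clopenP qP nPy]] :=
  qmax_clopen_separation Rrefl Rtr Rclosed stoneT Rclopen _ nqy.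
pose V := fun _ : nat => P.
have /gtrans_impP kuroda_x : truth R E V (gtrans kuroda) x.
  by rewrite (valid _ (gkur_trans kur_kur) V (fun=> clopenP)).
apply: (dneg_all_ip_false (V := V) Rrefl qx xy nPy).
apply: kuroda_x => //; exact: all_dneg_ip_true.
Qed.
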